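(* Let $R$ be an associative ring with identity. Suppose that at least one of the following two conditions holds: (1) for every $c \in R$ and every $x \in R$ such that $yx - 1 \in Rc$ for some $y \in R$, there exists a left unit $u \in R$ with $x - u \in Rc$; (2) for every $c \in R$ and every $x \in R$ such that $xy - 1 \in cR$ for some $y \in R$, there exists a right unit $u \in R$ with $x - u \in cR$. Then $R$ is directly finite, i.e. for all $a,b \in R$, $ab = 1$ implies $ba = 1$.
   Context: An element $u \in R$ is a left unit if there exists $v \in R$ with $vu = 1$, and a right unit if there exists $v \in R$ with $uv = 1$. Condition (1) is what the paper calls ''every left unit lifts modulo every left principal ideal'', and condition (2) is what it calls ''every right unit lifts modulo every right principal ideal''. *)

From mathcomp Require Import all_boot all_algebra.
Set Implicit Arguments. Unset Strict Implicit. Unset Printing Implicit Defensive.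
Import GRing.Theory.
Local Open Scope ring_scope.

Definition left_unit (R : pzRingType) (u : R) : Prop := exists v : R, v * u = 1.
Definition right_unit (R : pzRingType) (u : R) : Prop := exists v : R, u * v = 1.
Definition in_lprinc (R : pzRingType) (c z : R) : Prop := exists r : R, z = r * c.
Definition in_rprinc (R : pzRingType) (c z : R) : Prop := exists r : R, z = c * r.

Definition left_units_lift (R : pzRingType) : Prop :=
  forall c x : R, (exists y : R, in_lprinc c (y * x - 1)) ->
    exists u : R, left_unit u /\ in_lprinc c (x - u).

Definition right_units_lift (R : pzRingType) : Prop :=
  forall c x : R, (exists y : R, in_rprinc c (x * y - 1)) ->
    exists u : R, right_unit u /\ in_rprinc c (x - u).

Definition directly_finite (R : pzRingType) : Prop :=
  forall a b : R, a * b = 1 -> b * a = 1.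

From mathcomp Require Import all_boot all_algebra.
Local Open Scope ring_scope.
Import GRing.Theory.

(* If ab = 1, then e = 1 - ba satisfies eb = 0, and ba - 1 = -e lies in R e.
   Lifting a modulo R e gives a left unit u with (a - u) b = 0, i.e. ub = 1;
   a left unit with a right inverse is a unit, so u = a and ba = bu = 1.
   The right-hand hypothesis is the left-hand one for the opposite ring. *)

Section LeftUnitsLift.

Variable R : pzRingType.

Lemma left_right_inverse_eq {u v b : R} : v * u = 1 -> u * b = 1 -> v = b.
Proof. by move=> vu ub; rewrite -[v]mulr1 -ub mulrA vu mul1r. Qed.

Lemma one_sub_mulr_annihilates (a b : R) : a * b = 1 -> (1 - b * a) * b = 0.
Proof. by move=> ab; rewrite mulrBl mul1r -mulrA ab mulr1 subrr. Qed.

Lemma left_units_lift_directly_finite : left_units_lift R -> directly_finite R.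
Proof.
move=> lift a b ab.
have [u [[v vu] [r def_au]]] :
    exists u : R, left_unit u /\ in_lprinc (1 - b * a) (a - u).
  by apply: lift; exists b, (-1); rewrite mulN1r opprB.
have ub : u * b = 1.
  apply/eqP; rewrite -ab eq_sym -subr_eq0 -mulrBl def_au -mulrA.
  by rewrite one_sub_mulr_annihilates // mulr0.
have bu : b * u = 1 by rewrite -(left_right_inverse_eq vu ub).
have au : a = u by rewrite -[a]mulr1 -bu mulrA ab mul1r.
by rewrite au.
Qed.

End LeftUnitsLift.

Lemma right_units_lift_conv (R : pzRingType) :
  right_units_lift R -> left_units_lift R^c.
Proof.
move=> lift c x [y [r def_yx]].
have [|u [[v uv] [s def_xu]]] := lift c x; first by exists y, r.
by exists u; split; [exists v | exists s].
Qed.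

Lemma directly_finite_conv (R : pzRingType) :
  directly_finite R^c -> directly_finite R.
Proof. by move=> dfin a b ab; apply: (dfin b a). Qed.

Theorem lemma2 (R : pzRingType) :
  left_units_lift R \/ right_units_lift R -> directly_finite R.
Proof.
case=> [/left_units_lift_directly_finite //|/right_units_lift_conv lift].
exact/directly_finite_conv/left_units_lift_directly_finite.
Qed.
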